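(* In the free group $\mathbb{F}_2$ on $a,b$, set $a_0:=b^{-1}$, $b_0:=aba^{-1}$ and recursively $a_n:=a_{n-1}b_{n-1}$, $b_n:=a_{n-1}^{-1}b_{n-1}^{-1}$ for $n\ge1$. Let $n>0$. Then the reduced words representing $a_n$ and $b_n$ satisfy: if $n\equiv 0\pmod 3$, $a_n$ begins with $b^{-1}$ and ends with $b^{-1}$, and $b_n$ begins with $ab$ and ends with $ba^{-1}$; if $n\equiv 1\pmod 3$, $a_n$ begins with $b^{-1}$ and ends with $ba^{-1}$, and $b_n$ begins with $b$ and ends with $b^{-1}a^{-1}$; if $n\equiv 2\pmod 3$, $a_n$ begins with $b^{-1}$ and ends with $b^{-1}a^{-1}$, and $b_n$ begins with $ab^{-1}$ and ends with $b^{-1}$. Consequently, for all $n\in\mathbb{N}$ there is no cancellation in the product $a_n^{-1}b_n^{-1}$, and the product $a_nb_n$ involves cancellation if and only if $n\equiv 2\pmod 3$, in which case exactly the term $a^{-1}a$ cancels. Hence for $n\in\mathbb{N}$, $$\ell(a_{n+1})=\ell(a_n)+\ell(b_n)-\begin{cases}2 & n\equiv 2\pmod 3\\ 0&\text{otherwise}\end{cases},\qquad \ell(b_{n+1})=\ell(a_n)+\ell(b_n),$$ and $$\ell(a_n)=\begin{cases}\frac{13\cdot 2^n-6}{7}& n\equiv0\pmod 3\\ \frac{13\cdot 2^n+2}{7}& n\equiv1\pmod 3\\ \frac{13\cdot 2^n+4}{7}& n\equiv2\pmod 3\end{cases},\qquad \ell(b_n)=\begin{cases}\frac{13\cdot 2^n+8}{7}&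 n\equiv0\pmod 3\\ \frac{13\cdot 2^n+2}{7}& n\equiv1\pmod 3\\ \frac{13\cdot 2^n+4}{7}& n\equiv2\pmod 3\end{cases}.$$ In particular there is a constant $C'>0$ with $\ell(a_n)\le C'\cdot 2^n$ for all $n$.
   Context: $\ell$ denotes word length in $\mathbb{F}_2$ with respect to $\{a,a^{-1},b,b^{-1}\}$. *)

From mathcomp Require Import all_boot all_order all_algebra.
Set Implicit Arguments. Unset Strict Implicit. Unset Printing Implicit Defensive.

(* The free group F_2 on a, b, modelled by its reduced words.
   A letter is a pair (generator, is_inverse): generator false = a, true = b. *)
Definition letter := (bool * bool)%type.
Definition la : letter := (false, false).
Definition lA : letter := (false, true).
Definition lb : letter := (true, false).
Definition lB : letter := (true, true).
Definition linv (x : letter) : letter := (x.1, ~~ x.2).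

Definition word := seq letter.

Fixpoint reduced (w : word) : bool :=
  match w with
  | x :: ((y :: _) as w') => (y != linv x) && reduced w'
  | _ => true
  end.

Definition cons_red (x : letter) (w : word) : word :=
  match w with
  | y :: w' => if y == linv x then w' else x :: w
  | [::] => [:: x]
  end.

Definition reduce (w : word) : word := foldr cons_red [::] w.

Definition wmul (u v : word) : word := reduce (u ++ v).
Definition winv (u : word) : word := rev (map linv u).

Definition ell (w : word) : nat := size w.

Definition nocancel (u v : word) : Prop := wmul u v = u ++ v.

Fixpoint abseq (n : nat) : word * word :=
  match n with
  | 0 => ([:: lB], [:: la; lb; lA])
  | n'.+1 => let: (x, y) := abseq n' in (wmul x y, wmul (winv x) (winv y))
  end.
Definition an (n : nat) : word := (abseq n).1.
Definition bn (n : nat) : word := (abseq n).2.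

(* The first and last letters of a_n and b_n follow a pattern of period 3
   (it already holds for n = 0), and it propagates: in a product of reduced
   words cancellation can only start at the junction, and the pattern fixes
   the letters meeting there. They never cancel in a_n^-1 b_n^-1; in a_n b_n
   they cancel exactly when n = 2 mod 3, where a_n = ... b^-1 a^-1 meets
   b_n = a b^-1 ..., so a^-1 a cancels and the next pair b^-1 b^-1 does not. *)

From mathcomp Require Import all_boot all_order all_algebra.
From mathcomp Require Import zify lra.
Import Order.TTheory GRing.Theory Num.Theory.

Set Implicit Arguments.
Unset Strict Implicit.
Unset Printing Implicit Defensive.

Lemma linvK : involutive linv.
Proof. by case=> x []. Qed.

Lemma linv_inj : injective linv.
Proof. exact: inv_inj linvK. Qed.

Definition uncancelled (x y : letter) : bool := y != linv x.

Lemma reducedE w : reduced w = sorted uncancelled w.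
Proof.
elim: w => [|x [|y w] IH] //.
have -> : reduced [:: x, y & w] = uncancelled x y && reduced (y :: w) by [].
by rewrite IH.
Qed.

Lemma reduced_catl u v : reduced (u ++ v) -> reduced u.
Proof. by rewrite !reducedE => /cat_sorted2[]. Qed.

Lemma reduced_catr u v : reduced (u ++ v) -> reduced v.
Proof. by rewrite !reducedE => /cat_sorted2[]. Qed.

Lemma reduced_rcons_cat s x y t :
  reduced (rcons s x ++ y :: t) = [&& reduced (rcons s x), y != linv x & reduced (y :: t)].
Proof. by rewrite !reducedE cat_rcons sorted_cat_cons. Qed.

Lemma reduced_cat_ends u v q r : q != [::] -> r != [::] ->
  suffix q u -> prefix r v -> reduced (q ++ r) -> reduced u -> reduced v ->
  reduced (u ++ v).
Proof.
case/lastP: q => // q x _; case: r => // y r _.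
move=> /suffixP[u' ->] /prefixP[v' ->].
rewrite -rcons_cat cat_cons !reduced_rcons_cat => /and3P[_ yx _] -> /=.
by rewrite yx.
Qed.

Lemma reduced_reduce w : reduced (reduce w).
Proof.
elim: w => [|x w] //=; case: (reduce w) => [|y w'] //= red_w.
case: ifP => [_ | /negbT yx]; first by case: w' red_w => //= z w'' /andP[].
by rewrite /= yx red_w.
Qed.

Lemma reduce_id w : reduced w -> reduce w = w.
Proof.
elim: w => [|x w IH] //= red_xw.
have red_w : reduced w by case: w red_xw {IH} => //= y w /andP[].
by rewrite IH //; case: w red_xw {IH red_w} => //= y w /andP[/negbTE ->].
Qed.

Lemma cons_redK x w : reduced w -> cons_red x (cons_red (linv x) w) = w.
Proof.
case: w => [|y w] /=; first by rewrite eqxx.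
rewrite linvK; have [-> | yx] := eqVneq y x.
  by case: w => [|z w] //= /andP[/negbTE zx _]; rewrite zx.
by move=> _; rewrite /= eqxx.
Qed.

Lemma reduce_cancel u x v : reduce (u ++ x :: linv x :: v) = reduce (u ++ v).
Proof. by rewrite /reduce !foldr_cat /= cons_redK // reduced_reduce. Qed.

Lemma wmul_cancel u x v : wmul (rcons u x) (linv x :: v) = reduce (u ++ v).
Proof. by rewrite /wmul cat_rcons reduce_cancel. Qed.

Lemma nocancel_ends u v q r : q != [::] -> r != [::] ->
  suffix q u -> prefix r v -> reduced (q ++ r) -> reduced u -> reduced v ->
  nocancel u v.
Proof. by move=> *; apply: reduce_id; apply: (@reduced_cat_ends u v q r). Qed.

Lemma size_winv w : size (winv w) = size w.
Proof. by rewrite size_rev size_map. Qed.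

Lemma reduced_winv w : reduced w -> reduced (winv w).
Proof.
rewrite !reducedE rev_sorted sorted_map.
by rewrite (@eq_sorted _ _ uncancelled) // => x y; rewrite /= /uncancelled linvK eq_sym.
Qed.

Lemma prefix_map_inj (T U : eqType) (f : T -> U) s w : injective f ->
  prefix (map f s) (map f w) = prefix s w.
Proof. by move=> f_inj; rewrite !prefixE size_map -map_take (inj_eq (inj_map f_inj)). Qed.

Lemma suffix_winv s w : suffix (winv s) (winv w) = prefix s w.
Proof. by rewrite suffix_rev prefix_map_inj //; exact: linv_inj. Qed.

Lemma prefix_winv s w : prefix (winv s) (winv w) = suffix s w.
Proof. by rewrite prefix_rev /suffix -!map_rev prefix_map_inj //; exact: linv_inj. Qed.

Lemma prefix_catl_size (T : eqType) (p u v : seq T) :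
  size p <= size u -> prefix p (u ++ v) = prefix p u.
Proof. by move=> le_pu; rewrite !prefixE takel_cat. Qed.

Lemma suffix_catr_size (T : eqType) (s u v : seq T) :
  size s <= size v -> suffix s (u ++ v) = suffix s v.
Proof. by move=> le_sv; rewrite -!prefix_rev rev_cat prefix_catl_size ?size_rev. Qed.

Definition framed (p s w : word) : bool := prefix p w && suffix s w.

Lemma framed_cat p s p' s' u v :
  framed p s u -> framed p' s' v -> framed p s' (u ++ v).
Proof. by case/andP=> pu _ /andP[_ sv]; rewrite /framed prefix_catl // suffix_catr. Qed.

Lemma framed_winv_cat p s p' s' u v :
  framed p s u -> framed p' s' v -> framed (winv s) (winv p') (winv u ++ winv v).
Proof.
by move=> fu fv; apply: (@framed_cat _ (winv p) (winv s'));
  rewrite /framed prefix_winv suffix_winv andbC.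
Qed.

Definition shape (n : nat) (a b : word) : bool :=
  match n %% 3 with
  | 0 => framed [:: lB] [:: lB] a && framed [:: la; lb] [:: lb; lA] b
  | 1 => framed [:: lB] [:: lb; lA] a && framed [:: lb] [:: lB; lA] b
  | _ => framed [:: lB] [:: lB; lA] a && framed [:: la; lB] [:: lB] b
  end.

Section ShapeStep.

Variables (a b : word).
Hypotheses (red_a : reduced a) (red_b : reduced b).

Lemma shape_nocancel_winv n : shape n a b -> nocancel (winv a) (winv b).
Proof.
rewrite /shape; case: (n %% 3) => [|[|k]] /andP[/andP[pa _] /andP[_ sb]];
  rewrite -suffix_winv in pa; rewrite -prefix_winv in sb;
  by apply: (nocancel_ends _ _ pa sb); rewrite ?reduced_winv.
Qed.

Lemma shape_nocancel n : n %% 3 != 2 -> shape n a b -> nocancel a b.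
Proof.
rewrite /shape; have : n %% 3 < 3 by rewrite ltn_mod.
case: (n %% 3) => [|[|[|k]]] // _ _ /andP[/andP[_ sa] /andP[pb _]];
  exact: (nocancel_ends _ _ sa pb).
Qed.

Lemma shape_cancel n : n %% 3 = 2 -> shape n a b ->
  exists u v, [/\ a = rcons u lA, b = la :: v, wmul a b = u ++ v
                & framed [:: lB] [:: lB] (u ++ v)].
Proof.
rewrite /shape => -> /andP[/andP[pa /suffixP[a' Ea]] /andP[/prefixP[b' Eb] sb]].
set u := rcons a' lB; set v := lB :: b'.
have Eu : a = u ++ [:: lA] by rewrite Ea /u -cats1 -catA.
have Ev : b = [:: la] ++ v by [].
have pu : prefix [:: lB] u.
  by rewrite -(@prefix_catl_size _ _ _ [:: lA]) -?Eu // /u size_rcons.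
have su : suffix [:: lB] u by rewrite /u -cats1 suffix_suffix.
have pv : prefix [:: lB] v := prefix_prefix _ _.
have sv : suffix [:: lB] v by rewrite -(@suffix_catr_size _ _ [:: la]) -?Ev.
have red_u : reduced u by apply: (@reduced_catl _ [:: lA]); rewrite -Eu.
have red_v : reduced v by apply: (@reduced_catr [:: la]); rewrite -Ev.
exists u, v; split.
- by rewrite Eu cats1.
- by [].
- by rewrite Eu Ev cats1 wmul_cancel reduce_id // (reduced_cat_ends _ _ su pv).
- by apply: (@framed_cat _ [:: lB] [:: lB]); apply/andP.
Qed.

Lemma shape_succ n : shape n a b -> shape n.+1 (wmul a b) (wmul (winv a) (winv b)).
Proof.
move=> sh; rewrite (shape_nocancel_winv sh).
have [n2 | n_not2] := eqVneq (n %% 3) 2.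
  have [u [v [_ _ -> fuv]]] := shape_cancel n2 sh.
  move: sh; rewrite /shape -[n.+1]addn1 -modnDml n2 => /andP[fa fb] /=.
  by rewrite fuv (framed_winv_cat fa fb).
rewrite (shape_nocancel n_not2 sh); move: sh n_not2; rewrite /shape -[n.+1]addn1 -modnDml.
have : n %% 3 < 3 by rewrite ltn_mod.
by case: (n %% 3) => [|[|[|]]] // _ /andP[fa fb] _; rewrite (framed_cat fa fb) (framed_winv_cat fa fb).
Qed.

End ShapeStep.

Lemma an_succ n : an n.+1 = wmul (an n) (bn n).
Proof. by rewrite /an /bn /=; case: (abseq n). Qed.

Lemma bn_succ n : bn n.+1 = wmul (winv (an n)) (winv (bn n)).
Proof. by rewrite /an /bn /=; case: (abseq n). Qed.

Lemma reduced_an n : reduced (an n).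
Proof. by case: n => // n; rewrite an_succ reduced_reduce. Qed.

Lemma reduced_bn n : reduced (bn n).
Proof. by case: n => // n; rewrite bn_succ reduced_reduce. Qed.

Lemma shape_abseq n : shape n (an n) (bn n).
Proof.
elim: n => // n IH; rewrite an_succ bn_succ.
exact: (shape_succ (reduced_an n) (reduced_bn n) IH).
Qed.

Lemma nocancel_winv_abseq n : nocancel (winv (an n)) (winv (bn n)).
Proof. exact: (shape_nocancel_winv (reduced_an n) (reduced_bn n) (shape_abseq n)). Qed.

Lemma nocancel_abseq n : n %% 3 != 2 -> nocancel (an n) (bn n).
Proof. by move=> n_not2; apply: (shape_nocancel (reduced_an n) (reduced_bn n) n_not2 (shape_abseq n)). Qed.

Lemma cancel_abseq n : n %% 3 = 2 ->
  exists u v, [/\ an n = rcons u lA, bn n = la :: v & wmul (an n) (bn n) = u ++ v].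
Proof.
move=> n2; have [u [v [Ea Eb Euv _]]] :=
  shape_cancel (reduced_an n) (reduced_bn n) n2 (shape_abseq n).
by exists u, v.
Qed.

Lemma ell_an_succ n :
  ell (an n.+1) + (if n %% 3 == 2 then 2 else 0) = ell (an n) + ell (bn n).
Proof.
rewrite an_succ /ell; case: eqVneq => [n2 | n_not2].
  by have [u [v [-> -> ->]]] := cancel_abseq n2; rewrite size_cat size_rcons /=; lia.
by rewrite (nocancel_abseq n_not2) size_cat addn0.
Qed.

Lemma ell_bn_succ n : ell (bn n.+1) = ell (an n) + ell (bn n).
Proof. by rewrite bn_succ /ell nocancel_winv_abseq size_cat !size_winv addnC. Qed.

Local Open Scope ring_scope.

Definition offset_an (r : nat) : rat := match r with 0 => -6 | 1 => 2 | _ => 4 end.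
Definition offset_bn (r : nat) : rat := match r with 0 => 8 | 1 => 2 | _ => 4 end.

Lemma ell_abseq n :
  (ell (an n))%:R = (13 * 2 ^+ n + offset_an (n %% 3)) / 7 :> rat
  /\ (ell (bn n))%:R = (13 * 2 ^+ n + offset_bn (n %% 3)) / 7 :> rat.
Proof.
elim: n => [|n [IHa IHb]]; first by rewrite expr0 /=; split; lra.
have Ea := congr1 (fun k : nat => k%:R : rat) (ell_an_succ n).
have Eb := congr1 (fun k : nat => k%:R : rat) (ell_bn_succ n).
move: Ea Eb; rewrite /= !natrD IHa IHb exprS -[n.+1]addn1 -modnDml.
have : (n %% 3 < 3)%N by rewrite ltn_mod.
by case: (n %% 3)%N => [|[|[|]]] //= _ Ea Eb; split; lra.
Qed.

Theorem lemma2p2 :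
  (* prefixes / suffixes of the reduced words, for n > 0 *)
  (forall n : nat, (0 < n)%N ->
     [/\ (n %% 3 = 0)%N ->
           [/\ prefix [:: lB] (an n), suffix [:: lB] (an n),
               prefix [:: la; lb] (bn n) & suffix [:: lb; lA] (bn n)],
         (n %% 3 = 1)%N ->
           [/\ prefix [:: lB] (an n), suffix [:: lb; lA] (an n),
               prefix [:: lb] (bn n) & suffix [:: lB; lA] (bn n)]
       & (n %% 3 = 2)%N ->
           [/\ prefix [:: lB] (an n), suffix [:: lB; lA] (an n),
               prefix [:: la; lB] (bn n) & suffix [:: lB] (bn n)]]) /\
  (* no cancellation in a_n^{-1} b_n^{-1} *)
  (forall n : nat, nocancel (winv (an n)) (winv (bn n))) /\
  (* a_n b_n involves cancellation iff n = 2 mod 3 *)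
  (forall n : nat, ~ nocancel (an n) (bn n) <-> (n %% 3 = 2)%N) /\
  (* in which case exactly the term a^{-1} a cancels *)
  (forall n : nat, (n %% 3 = 2)%N ->
     exists u v : word,
       [/\ an n = rcons u lA, bn n = la :: v & wmul (an n) (bn n) = u ++ v]) /\
  (* length recursions *)
  (forall n : nat,
     (ell (an n.+1) + (if n %% 3 == 2 then 2 else 0) = ell (an n) + ell (bn n))%N
     /\ ell (bn n.+1) = (ell (an n) + ell (bn n))%N) /\
  (* closed forms *)
  (forall n : nat,
     [/\ (n %% 3 = 0)%N ->
           (ell (an n))%:R = (13 * 2 ^+ n - 6) / 7 :> rat
           /\ (ell (bn n))%:R = (13 * 2 ^+ n + 8) / 7 :> rat,
         (n %% 3 = 1)%N ->
           (ell (an n))%:R = (13 * 2 ^+ n + 2) / 7 :> rat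
           /\ (ell (bn n))%:R = (13 * 2 ^+ n + 2) / 7 :> rat
       & (n %% 3 = 2)%N ->
           (ell (an n))%:R = (13 * 2 ^+ n + 4) / 7 :> rat
           /\ (ell (bn n))%:R = (13 * 2 ^+ n + 4) / 7 :> rat]) /\
  (* linear-in-2^n bound *)
  (exists C : rat, 0 < C /\ forall n : nat, (ell (an n))%:R <= C * 2 ^+ n).
Proof.
split.
  move=> n _; have sh := shape_abseq n.
  by split=> n3; move: sh; rewrite /shape n3 => /andP[/andP[-> ->] /andP[-> ->]].
split; first exact: nocancel_winv_abseq.
split.
  move=> n; split=> [nc | n2].
    have [//|n_not2] := eqVneq (n %% 3)%N 2.
    by case: nc; apply: nocancel_abseq.
  have [u [v [Ea Eb Euv]]] := cancel_abseq n2.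
  by rewrite /nocancel Euv Ea Eb => /(congr1 size); rewrite !size_cat size_rcons /=; lia.
split; first exact: cancel_abseq.
split; first by move=> n; split; [exact: ell_an_succ | exact: ell_bn_succ].
split.
  by move=> n; have [Ea Eb] := ell_abseq n; split=> n3; rewrite Ea Eb n3.
exists 3; split=> [|n]; first by [].
have [-> _] := ell_abseq n.
have : 1 <= 2 ^+ n :> rat by rewrite exprn_ege1.
have : offset_an (n %% 3) <= 4 by case: (n %% 3)%N => [|[|]].
lra.
Qed.
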